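(* Let $\mathbb{C}$ be a pointed protomodular category, let $S$ and $T$ be objects of $\mathbb{C}$, and let $X=S\times T$. If $X$ is proto-complete (respectively complete, complete${}^*$, strong-complete), then so are both $S$ and $T$.
   Context: A pointed category with finite limits is protomodular if the split short five lemma holds. A normal monomorphism is a kernel of some morphism; a protosplit monomorphism is a kernel of a split epimorphism; a monomorphism $m:S\to Y$ is Bourn-normal if there is an equivalence relation $(R,r_1,r_2)$ on $Y$ and $\tilde m:S\times S\to R$ with $r_1\tilde m=m\pi_1$, $r_2\tilde m=m\pi_2$ and the square $r_1\tilde m=m\pi_1$ a pullback. An object $X$ is proto-complete if every protosplit monomorphism with domain $X$ is a split monomorphism; complete if every normal monomorphism with domain $X$ is a split monomorphism; complete${}^*$ if every Bourn-normal monomorphism with domain $X$ is a split monomorphism; strong-complete if every protosplit monomorphism with domain $X$ is a split monomorphism with a unique retraction. *)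

Set Implicit Arguments.
Unset Strict Implicit.

Record Category := {
  Ob :> Type;
  Hom : Ob -> Ob -> Type;
  comp : forall {A B C : Ob}, Hom B C -> Hom A B -> Hom A C;
  idm : forall A : Ob, Hom A A;
  comp_assoc : forall (A B C D : Ob) (f : Hom C D) (g : Hom B C) (h : Hom A B),
      comp f (comp g h) = comp (comp f g) h;
  comp_id_l : forall (A B : Ob) (f : Hom A B), comp (idm B) f = f;
  comp_id_r : forall (A B : Ob) (f : Hom A B), comp f (idm A) = f
}.

Arguments Hom {c} _ _.
Arguments comp {c A B C} _ _.
Arguments idm {c} _.

Notation "g \o f" := (comp g f) (at level 40, left associativity).

Section Notions.
Context {C : Category}.

Definition is_iso {A B : C} (f : Hom A B) : Prop :=
  exists g : Hom B A, g \o f = idm A /\ f \o g = idm B.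

Definition is_mono {A B : C} (m : Hom A B) : Prop :=
  forall (Z : C) (x y : Hom Z A), m \o x = m \o y -> x = y.

Definition split_mono {A B : C} (m : Hom A B) : Prop :=
  exists r : Hom B A, r \o m = idm A.

Definition split_mono_unique_retraction {A B : C} (m : Hom A B) : Prop :=
  exists! r : Hom B A, r \o m = idm A.

Definition split_epi {A B : C} (p : Hom A B) : Prop :=
  exists s : Hom B A, p \o s = idm B.

Definition is_zero_object (z : C) : Prop :=
  (forall A : C, exists! f : Hom z A, True) /\
  (forall A : C, exists! f : Hom A z, True).

Definition pointed : Prop := exists z : C, is_zero_object z.

Definition zero_mor {A B : C} (f : Hom A B) : Prop :=
  exists (z : C) (g : Hom A z) (h : Hom z B), is_zero_object z /\ f = h \o g.

Definition is_kernel {K A B : C} (k : Hom K A) (f : Hom A B) : Prop :=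
  zero_mor (f \o k) /\
  forall (Z : C) (x : Hom Z A), zero_mor (f \o x) ->
    exists! y : Hom Z K, k \o y = x.

Definition is_product {P S T : C} (p1 : Hom P S) (p2 : Hom P T) : Prop :=
  forall (Z : C) (a : Hom Z S) (b : Hom Z T),
    exists! h : Hom Z P, p1 \o h = a /\ p2 \o h = b.

Definition is_pullback {P A B D : C} (p1 : Hom P A) (p2 : Hom P B)
    (f : Hom A D) (g : Hom B D) : Prop :=
  f \o p1 = g \o p2 /\
  forall (Z : C) (a : Hom Z A) (b : Hom Z B), f \o a = g \o b ->
    exists! h : Hom Z P, p1 \o h = a /\ p2 \o h = b.

Definition is_terminal (t : C) : Prop := forall A : C, exists! f : Hom A t, True.

Definition has_finite_limits : Prop :=
  (exists t : C, is_terminal t) /\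
  (forall (A B D : C) (f : Hom A D) (g : Hom B D),
      exists (P : C) (p1 : Hom P A) (p2 : Hom P B), is_pullback p1 p2 f g).

(* Pointed protomodular: the split short five lemma holds. *)
Definition protomodular : Prop :=
  forall (K A B K' A' B' : C)
         (k : Hom K A) (p : Hom A B) (s : Hom B A)
         (k' : Hom K' A') (p' : Hom A' B') (s' : Hom B' A')
         (u : Hom K K') (v : Hom A A') (w : Hom B B'),
    p \o s = idm B -> is_kernel k p ->
    p' \o s' = idm B' -> is_kernel k' p' ->
    v \o k = k' \o u -> p' \o v = w \o p -> v \o s = s' \o w ->
    is_iso u -> is_iso w -> is_iso v.

(* Internal equivalence relation (R, r1, r2) on Y: (r1, r2) jointly monic
   and, for every object Z, the induced relation on Hom Z Y is reflexive,
   symmetric and transitive. *)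
Definition is_equivalence_relation {R Y : C} (r1 r2 : Hom R Y) : Prop :=
  (forall (Z : C) (a b : Hom Z R), r1 \o a = r1 \o b -> r2 \o a = r2 \o b -> a = b) /\
  (forall (Z : C) (x : Hom Z Y), exists c : Hom Z R, r1 \o c = x /\ r2 \o c = x) /\
  (forall (Z : C) (a : Hom Z R), exists c : Hom Z R, r1 \o c = r2 \o a /\ r2 \o c = r1 \o a) /\
  (forall (Z : C) (a b : Hom Z R), r2 \o a = r1 \o b ->
      exists c : Hom Z R, r1 \o c = r1 \o a /\ r2 \o c = r2 \o b).

Definition normal_mono {S Y : C} (m : Hom S Y) : Prop :=
  exists (B : C) (f : Hom Y B), is_kernel m f.

Definition protosplit_mono {S Y : C} (m : Hom S Y) : Prop :=
  exists (B : C) (f : Hom Y B), split_epi f /\ is_kernel m f.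

Definition bourn_normal {S Y : C} (m : Hom S Y) : Prop :=
  is_mono m /\
  exists (R : C) (r1 r2 : Hom R Y), is_equivalence_relation r1 r2 /\
  exists (P : C) (pi1 pi2 : Hom P S), is_product pi1 pi2 /\
  exists mt : Hom P R,
    r1 \o mt = m \o pi1 /\ r2 \o mt = m \o pi2 /\ is_pullback mt pi1 r1 m.

Definition proto_complete (X : C) : Prop :=
  forall (Y : C) (m : Hom X Y), protosplit_mono m -> split_mono m.

Definition complete (X : C) : Prop :=
  forall (Y : C) (m : Hom X Y), normal_mono m -> split_mono m.

Definition complete_star (X : C) : Prop :=
  forall (Y : C) (m : Hom X Y), bourn_normal m -> split_mono m.

Definition strong_complete (X : C) : Prop :=
  forall (Y : C) (m : Hom X Y), protosplit_mono m -> split_mono_unique_retraction m.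

End Notions.

(* For X = S x T and a monomorphism m : S -> Y, the map m x 1_T : X -> Y x T
   inherits every kind of normality of m: if m is the kernel of f, then
   m x 1_T is the kernel of f o pi_Y, which is split when f is; if m is
   Bourn-normal to R, then m x 1_T is Bourn-normal to R x (T x T), the square
   being the product of the square of m with a trivial one. Conversely a
   retraction r of m x 1_T yields the retraction pi_S o r o <1, 0> of m, and
   since every retraction r' of m gives the retraction r' x 1_T of m x 1_T,
   uniqueness of retractions also descends. The other factor is handled by
   symmetry. *)

From Stdlib Require Import ClassicalEpsilon.

Section Products.
Context {C : Category}.

Section Pairing.
Context {P A B : C} {p1 : Hom P A} {p2 : Hom P B} (HP : is_product p1 p2).

Definition pair {Z : C} (a : Hom Z A) (b : Hom Z B) : Hom Z P :=
  proj1_sig (constructive_definite_description _ (HP Z a b)).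

Lemma pair_fst {Z : C} (a : Hom Z A) (b : Hom Z B) : p1 \o pair a b = a.
Proof. unfold pair. destruct (constructive_definite_description _ _) as [h Hh]. exact (proj1 Hh). Qed.

Lemma pair_snd {Z : C} (a : Hom Z A) (b : Hom Z B) : p2 \o pair a b = b.
Proof. unfold pair. destruct (constructive_definite_description _ _) as [h Hh]. exact (proj2 Hh). Qed.

Lemma product_ext {Z : C} (h h' : Hom Z P) :
  p1 \o h = p1 \o h' -> p2 \o h = p2 \o h' -> h = h'.
Proof.
  intros E1 E2. destruct (HP Z (p1 \o h) (p2 \o h)) as [x [_ Ux]].
  transitivity x; [symmetry|]; apply Ux; auto.
Qed.

Lemma pair_comp {Z W : C} (a : Hom Z A) (b : Hom Z B) (g : Hom W Z) :
  pair a b \o g = pair (a \o g) (b \o g).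
Proof.
  apply product_ext; rewrite comp_assoc, ?pair_fst, ?pair_snd; reflexivity.
Qed.

End Pairing.

Lemma is_product_sym {P A B : C} {p1 : Hom P A} {p2 : Hom P B} :
  is_product p1 p2 -> is_product p2 p1.
Proof.
  intros HP Z b a. destruct (HP Z a b) as [h [[Ha Hb] Uh]].
  exists h. split; [auto|]. intros h' [Hb' Ha']. auto.
Qed.

Definition has_binary_products : Prop :=
  forall A B : C, exists (P : C) (p1 : Hom P A) (p2 : Hom P B), is_product p1 p2.

Lemma finite_limits_binary_products : @has_finite_limits C -> has_binary_products.
Proof.
  intros [[t Ht] Hpb] A B.
  destruct (Ht A) as [f _], (Ht B) as [g _].
  destruct (Hpb A B t f g) as [P [p1 [p2 [_ Up]]]].
  exists P, p1, p2. intros Z a b. apply Up.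
  destruct (Ht Z) as [x [_ Ux]].
  transitivity x; [symmetry|]; apply Ux; trivial.
Qed.

Definition prod_map {A A1 A2 B B1 B2 : C} {a1 : Hom A A1} {a2 : Hom A A2}
    {b1 : Hom B B1} {b2 : Hom B B2} (HA : is_product a1 a2) (HB : is_product b1 b2)
    (f : Hom A1 B1) (g : Hom A2 B2) : Hom A B :=
  pair HB (f \o a1) (g \o a2).

End Products.

Hint Rewrite <- @comp_assoc : cat.
Hint Rewrite @comp_id_l @comp_id_r @pair_fst @pair_snd @pair_comp : cat.

Tactic Notation "cat_simpl" := unfold prod_map; autorewrite with cat.
Tactic Notation "cat_simpl" "in" hyp(H) := unfold prod_map in H; autorewrite with cat in H.

Section ProductMaps.
Context {C : Category}.

Lemma prod_map_id {A A1 A2 : C} {a1 : Hom A A1} {a2 : Hom A A2} (HA : is_product a1 a2) :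
  prod_map HA HA (idm A1) (idm A2) = idm A.
Proof. apply (product_ext HA); cat_simpl; reflexivity. Qed.

Lemma prod_map_comp {A A1 A2 B B1 B2 D D1 D2 : C}
    {a1 : Hom A A1} {a2 : Hom A A2} {b1 : Hom B B1} {b2 : Hom B B2}
    {d1 : Hom D D1} {d2 : Hom D D2}
    (HA : is_product a1 a2) (HB : is_product b1 b2) (HD : is_product d1 d2)
    (f : Hom B1 D1) (g : Hom B2 D2) (f' : Hom A1 B1) (g' : Hom A2 B2) :
  prod_map HB HD f g \o prod_map HA HB f' g' = prod_map HA HD (f \o f') (g \o g').
Proof. apply (product_ext HD); cat_simpl; reflexivity. Qed.

Lemma mono_prod_map {A A1 A2 B B1 B2 : C} {a1 : Hom A A1} {a2 : Hom A A2}
    {b1 : Hom B B1} {b2 : Hom B B2} (HA : is_product a1 a2) (HB : is_product b1 b2)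
    (f : Hom A1 B1) (g : Hom A2 B2) :
  is_mono f -> is_mono g -> is_mono (prod_map HA HB f g).
Proof.
  intros Hf Hg Z x y E.
  assert (E1 := f_equal (comp b1) E). assert (E2 := f_equal (comp b2) E).
  cat_simpl in E1. cat_simpl in E2.
  apply (product_ext HA); auto.
Qed.

Lemma product_interchange {S T X SS TT XX : C}
    {pS : Hom X S} {pT : Hom X T} (HX : is_product pS pT)
    {s1 s2 : Hom SS S} (HSS : is_product s1 s2)
    {t1 t2 : Hom TT T} (HTT : is_product t1 t2)
    {x1 x2 : Hom XX X} (HXX : is_product x1 x2) :
  is_product (pair HSS (pS \o x1) (pS \o x2)) (pair HTT (pT \o x1) (pT \o x2)).
Proof.
  intros Z u v.
  exists (pair HXX (pair HX (s1 \o u) (t1 \o v)) (pair HX (s2 \o u) (t2 \o v))).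
  split.
  - split; [apply (product_ext HSS) | apply (product_ext HTT)]; cat_simpl; reflexivity.
  - intros h [Hu Hv]. subst u v.
    apply (product_ext HXX); apply (product_ext HX); cat_simpl; reflexivity.
Qed.

Lemma is_pullback_id {A B : C} (v : Hom A B) : is_pullback (idm A) v v (idm B).
Proof.
  split; [rewrite comp_id_l, comp_id_r; reflexivity|].
  intros Z a b E. rewrite comp_id_l in E.
  exists a. split; [rewrite comp_id_l; auto|].
  intros h [Ha _]. rewrite comp_id_l in Ha. auto.
Qed.

Section PullbackProduct.
Context {P A B D P' A' B' D' PP AA BB DD : C}
  {u1 : Hom P A} {u2 : Hom P B} {f : Hom A D} {g : Hom B D}
  {v1 : Hom P' A'} {v2 : Hom P' B'} {f' : Hom A' D'} {g' : Hom B' D'}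
  {pp1 : Hom PP P} {pp2 : Hom PP P'} {aa1 : Hom AA A} {aa2 : Hom AA A'}
  {bb1 : Hom BB B} {bb2 : Hom BB B'} {dd1 : Hom DD D} {dd2 : Hom DD D'}
  (HPP : is_product pp1 pp2) (HAA : is_product aa1 aa2)
  (HBB : is_product bb1 bb2) (HDD : is_product dd1 dd2).

Lemma pullback_prod_map :
  is_pullback u1 u2 f g -> is_pullback v1 v2 f' g' ->
  is_pullback (prod_map HPP HAA u1 v1) (prod_map HPP HBB u2 v2)
              (prod_map HAA HDD f f') (prod_map HBB HDD g g').
Proof.
  intros [Eu Uu] [Ev Uv]. split.
  - apply (product_ext HDD); cat_simpl; rewrite !comp_assoc, ?Eu, ?Ev; reflexivity.
  - intros Z a b E.
    assert (E1 := f_equal (comp dd1) E). assert (E2 := f_equal (comp dd2) E).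
    cat_simpl in E1. cat_simpl in E2.
    destruct (Uu Z _ _ E1) as [h [[Ha Hb] Uh]].
    destruct (Uv Z _ _ E2) as [h' [[Ha' Hb'] Uh']].
    exists (pair HPP h h'). split.
    + split; [apply (product_ext HAA) | apply (product_ext HBB)]; cat_simpl; auto.
    + intros k [Hk1 Hk2]. subst a b.
      apply (product_ext HPP); cat_simpl; [apply Uh | apply Uh']; cat_simpl; auto.
Qed.

End PullbackProduct.

Lemma product_equivalence_relation {P A : C} {p1 p2 : Hom P A} :
  is_product p1 p2 -> is_equivalence_relation p1 p2.
Proof.
  intros HP. split; [|split; [|split]].
  - intros Z a b. apply (product_ext HP).
  - intros Z x. exists (pair HP x x). cat_simpl. auto.
  - intros Z a. exists (pair HP (p2 \o a) (p1 \o a)). cat_simpl. auto.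
  - intros Z a b _. exists (pair HP (p1 \o a) (p2 \o b)). cat_simpl. auto.
Qed.

Lemma equivalence_relation_prod {Y T R E YT RE : C}
    {y1 : Hom YT Y} {y2 : Hom YT T} (HYT : is_product y1 y2)
    {c1 : Hom RE R} {c2 : Hom RE E} (HRE : is_product c1 c2)
    (r1 r2 : Hom R Y) (e1 e2 : Hom E T) :
  is_equivalence_relation r1 r2 -> is_equivalence_relation e1 e2 ->
  is_equivalence_relation (prod_map HRE HYT r1 e1) (prod_map HRE HYT r2 e2).
Proof.
  intros [Mr [Rr [Sr Tr]]] [Me [Re [Se Te]]]. split; [|split; [|split]].
  - intros Z a b F1 F2.
    assert (F11 := f_equal (comp y1) F1). assert (F12 := f_equal (comp y2) F1).
    assert (F21 := f_equal (comp y1) F2). assert (F22 := f_equal (comp y2) F2).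
    cat_simpl in F11. cat_simpl in F12. cat_simpl in F21. cat_simpl in F22.
    apply (product_ext HRE); auto.
  - intros Z x.
    destruct (Rr Z (y1 \o x)) as [cr [Hr1 Hr2]], (Re Z (y2 \o x)) as [ce [He1 He2]].
    exists (pair HRE cr ce).
    split; apply (product_ext HYT); cat_simpl; auto.
  - intros Z a.
    destruct (Sr Z (c1 \o a)) as [cr [Hr1 Hr2]], (Se Z (c2 \o a)) as [ce [He1 He2]].
    exists (pair HRE cr ce).
    split; apply (product_ext HYT); cat_simpl; auto.
  - intros Z a b F.
    assert (F1 := f_equal (comp y1) F). assert (F2 := f_equal (comp y2) F).
    cat_simpl in F1. cat_simpl in F2.
    destruct (Tr Z _ _ F1) as [cr [Hr1 Hr2]], (Te Z _ _ F2) as [ce [He1 He2]].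
    exists (pair HRE cr ce).
    split; apply (product_ext HYT); cat_simpl; auto.
Qed.

Lemma split_epi_comp {A B D : C} (f : Hom A B) (g : Hom B D) :
  split_epi f -> split_epi g -> split_epi (g \o f).
Proof.
  intros [s Hs] [t Ht]. exists (s \o t).
  rewrite <- comp_assoc, (comp_assoc f), Hs, comp_id_l. exact Ht.
Qed.

End ProductMaps.

Section ZeroMorphisms.
Context {C : Category}.

Lemma to_zero_object_unique {z A : C} (Hz : is_zero_object z) (f g : Hom A z) : f = g.
Proof. destruct (proj2 Hz A) as [x [_ Ux]]. transitivity x; [symmetry|]; apply Ux; trivial. Qed.

Lemma from_zero_object_unique {z A : C} (Hz : is_zero_object z) (f g : Hom z A) : f = g.
Proof. destruct (proj1 Hz A) as [x [_ Ux]]. transitivity x; [symmetry|]; apply Ux; trivial. Qed.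

Context {z : C} (Hz : is_zero_object z).

Definition zero (A B : C) : Hom A B :=
  proj1_sig (constructive_definite_description _ (proj1 Hz B))
  \o proj1_sig (constructive_definite_description _ (proj2 Hz A)).

Lemma zero_comp {A B D : C} (f : Hom A B) : zero B D \o f = zero A D.
Proof. unfold zero. rewrite <- comp_assoc. f_equal. apply (to_zero_object_unique Hz). Qed.

Lemma comp_zero {A B D : C} (f : Hom B D) : f \o zero A B = zero A D.
Proof. unfold zero. rewrite comp_assoc. f_equal. apply (from_zero_object_unique Hz). Qed.

Lemma zero_morP {A B : C} (f : Hom A B) : zero_mor f <-> f = zero A B.
Proof.
  split.
  - intros [z' [g [h [Hz' ->]]]].
    destruct (proj1 Hz z') as [v _].
    assert (Hvz : v \o (zero z' z) = idm z') by apply (from_zero_object_unique Hz').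
    rewrite <- (comp_id_r h), <- Hvz, comp_zero, <- comp_assoc, zero_comp.
    apply comp_zero.
  - intros ->. exists z. unfold zero.
    eexists; eexists; split; [exact Hz | reflexivity].
Qed.

Lemma split_epi_fst {P A B : C} {p1 : Hom P A} {p2 : Hom P B} (HP : is_product p1 p2) :
  split_epi p1.
Proof. exists (pair HP (idm A) (zero A B)). apply pair_fst. Qed.

End ZeroMorphisms.

Hint Rewrite @zero_comp @comp_zero : cat.

Section ProductWithIdentity.
Context {C : Category} {z : C} (Hz : is_zero_object z).
Context {S T X : C} {pS : Hom X S} {pT : Hom X T} (HX : is_product pS pT).
Context {Y YT : C} {q1 : Hom YT Y} {q2 : Hom YT T} (HYT : is_product q1 q2).
Variable m : Hom S Y.

Local Notation mT := (prod_map HX HYT m (idm T)).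

Lemma kernel_prod_map_id {B : C} (f : Hom Y B) :
  is_kernel m f -> is_kernel mT (f \o q1).
Proof.
  intros [Hfm Um]. apply (zero_morP Hz) in Hfm. split.
  - apply (zero_morP Hz). cat_simpl. rewrite comp_assoc, Hfm. cat_simpl. reflexivity.
  - intros Z x Hx. apply (zero_morP Hz) in Hx.
    assert (Hx' : zero_mor (f \o (q1 \o x)))
      by (apply (zero_morP Hz); rewrite comp_assoc; exact Hx).
    destruct (Um Z _ Hx') as [y [Ey Uy]].
    exists (pair HX y (q2 \o x)). split.
    + apply (product_ext HYT); cat_simpl; auto.
    + intros h Eh. subst x.
      apply (product_ext HX); cat_simpl; [apply Uy; cat_simpl|]; reflexivity.
Qed.

Lemma protosplit_mono_prod_map_id : protosplit_mono m -> protosplit_mono mT.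
Proof.
  intros [B [f [Hf Hk]]]. exists B, (f \o q1). split.
  - exact (split_epi_comp _ _ (split_epi_fst Hz HYT) Hf).
  - exact (kernel_prod_map_id f Hk).
Qed.

Lemma normal_mono_prod_map_id : normal_mono m -> normal_mono mT.
Proof. intros [B [f Hk]]. exists B, (f \o q1). exact (kernel_prod_map_id f Hk). Qed.

Lemma bourn_normal_prod_map_id :
  @has_binary_products C -> bourn_normal m -> bourn_normal mT.
Proof.
  intros prods [Hm [R [r1 [r2 [Hr [P [pi1 [pi2 [HP [mt [E1 [E2 Hpb]]]]]]]]]]]].
  destruct (prods T T) as [TT [t1 [t2 HTT]]].
  destruct (prods R TT) as [RT [c1 [c2 HRT]]].
  destruct (prods X X) as [XX [x1 [x2 HXX]]].
  pose proof (product_interchange HX HP HTT HXX) as HPT.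
  assert (Hx1 : prod_map HPT HX pi1 t1 = x1)
    by (apply (product_ext HX); cat_simpl; reflexivity).
  split.
  { apply mono_prod_map; [exact Hm | intros Z x y; rewrite !comp_id_l; trivial]. }
  exists RT, (prod_map HRT HYT r1 t1), (prod_map HRT HYT r2 t2). split.
  { apply equivalence_relation_prod; [exact Hr | exact (product_equivalence_relation HTT)]. }
  exists XX, x1, x2. split; [exact HXX|].
  exists (prod_map HPT HRT mt (idm TT)). split; [|split].
  - apply (product_ext HYT); cat_simpl; rewrite ?comp_assoc, ?E1; cat_simpl; reflexivity.
  - apply (product_ext HYT); cat_simpl; rewrite ?comp_assoc, ?E2; cat_simpl; reflexivity.
  - pose proof (pullback_prod_map HPT HRT HX HYT Hpb (is_pullback_id t1)) as Hpb'.
    rewrite Hx1 in Hpb'. exact Hpb'.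
Qed.

Lemma retraction_prod_map_id (r : Hom YT X) :
  r \o mT = idm X -> (pS \o (r \o pair HYT (idm Y) (zero Hz Y T))) \o m = idm S.
Proof.
  intros Hr.
  assert (Hinl : pair HYT (idm Y) (zero Hz Y T) \o m = mT \o pair HX (idm S) (zero Hz S T))
    by (apply (product_ext HYT); cat_simpl; reflexivity).
  rewrite <- !comp_assoc, Hinl, (comp_assoc r), Hr. cat_simpl. reflexivity.
Qed.

Lemma split_mono_of_prod_map_id : split_mono mT -> split_mono m.
Proof. intros [r Hr]. eexists. exact (retraction_prod_map_id r Hr). Qed.

Lemma unique_retraction_of_prod_map_id :
  split_mono_unique_retraction mT -> split_mono_unique_retraction m.
Proof.
  intros [r [Hr Ur]]. eexists. split; [exact (retraction_prod_map_id r Hr)|].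
  intros r' Hr'.
  assert (Er : r = prod_map HYT HX r' (idm T)).
  { apply Ur. rewrite prod_map_comp, Hr', comp_id_l. apply prod_map_id. }
  subst r. cat_simpl. reflexivity.
Qed.

End ProductWithIdentity.

Section Factors.
Context {C : Category} {z : C} (Hz : is_zero_object z) (prods : @has_binary_products C).
Context {S T X : C} {pS : Hom X S} {pT : Hom X T} (HX : is_product pS pT).

Lemma proto_complete_factor : proto_complete X -> proto_complete S.
Proof.
  intros HXc Y m Hm. destruct (prods Y T) as [YT [q1 [q2 HYT]]].
  apply (split_mono_of_prod_map_id Hz HX HYT), HXc.
  exact (protosplit_mono_prod_map_id Hz HX HYT m Hm).
Qed.

Lemma complete_factor : complete X -> complete S.
Proof.
  intros HXc Y m Hm. destruct (prods Y T) as [YT [q1 [q2 HYT]]].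
  apply (split_mono_of_prod_map_id Hz HX HYT), HXc.
  exact (normal_mono_prod_map_id Hz HX HYT m Hm).
Qed.

Lemma complete_star_factor : complete_star X -> complete_star S.
Proof.
  intros HXc Y m Hm. destruct (prods Y T) as [YT [q1 [q2 HYT]]].
  apply (split_mono_of_prod_map_id Hz HX HYT), HXc.
  exact (bourn_normal_prod_map_id HX HYT m prods Hm).
Qed.

Lemma strong_complete_factor : strong_complete X -> strong_complete S.
Proof.
  intros HXc Y m Hm. destruct (prods Y T) as [YT [q1 [q2 HYT]]].
  apply (unique_retraction_of_prod_map_id Hz HX HYT), HXc.
  exact (protosplit_mono_prod_map_id Hz HX HYT m Hm).
Qed.

End Factors.

Theorem proposition4p12 (C : Category) :
  @pointed C -> @has_finite_limits C -> @protomodular C ->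
  forall (S T X : C) (pS : Hom X S) (pT : Hom X T),
    is_product pS pT ->
    ((proto_complete X -> proto_complete S /\ proto_complete T) /\
     (complete X -> complete S /\ complete T) /\
     (complete_star X -> complete_star S /\ complete_star T) /\
     (strong_complete X -> strong_complete S /\ strong_complete T)).
Proof.
  intros [z Hz] Hlim _ S T X pS pT HX.
  pose proof (finite_limits_binary_products Hlim) as prods.
  pose proof (is_product_sym HX) as HX'.
  split; [|split; [|split]]; intros HXc; split.
  - exact (proto_complete_factor Hz prods HX HXc).
  - exact (proto_complete_factor Hz prods HX' HXc).
  - exact (complete_factor Hz prods HX HXc).
  - exact (complete_factor Hz prods HX' HXc).
  - exact (complete_star_factor Hz prods HX HXc).
  - exact (complete_star_factor Hz prods HX' HXc).
  - exact (strong_complete_factor Hz prods HX HXc).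
  - exact (strong_complete_factor Hz prods HX' HXc).
Qed.
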